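(* For all multidistributions $\mu,\nu$ on configurations, real $w\ge0$, expectation $f$ and $c\in\{\mathit{true},\mathit{false}\}$: if $\mu\Rightarrow_w\nu$ (one step of the lifted relation on multidistributions), then \[ \mathbb{E}_\mu(e_c(f)) \;\ge\; [c]\cdot w + \mathbb{E}_\nu(e_c(f)). \]
   Context: Let $\mathrm{Var}$ be a finite set of integer-valued variables and $\Sigma = \mathrm{Var}\to\mathbb{Z}$ the set of stores; $\sigma[x\mapsto i]$ is the store updated at $x$. Boolean expressions $\varphi$ are evaluated on stores ($\sigma\models\varphi$). A distribution expression $d$ assigns to each store $\sigma$ a probability distribution $d(\sigma)$ on $\mathbb{Z}$. Commands: $C,D ::= \mathtt{skip} \mid \mathtt{tick}(r) \mid \mathtt{halt} \mid x :\approx d \mid \mathtt{if}_{[\psi]}(\varphi)\{C\}\{D\} \mid \mathtt{while}_{[\psi]}(\varphi)\{C\} \mid C \,\square\, D \mid C \oplus_p D \mid C;D$, with $r$ a nonnegative rational, $p\in[0,1]$. Expectations are functions $f:\Sigma\to[0,\infty]$, with pointwise operations, $\mathbf{r}$ the constant $r$, $[\varphi](\sigma)\in\{0,1\}$ the indicator, $[c]=1$ if $c=\mathit{true}$ and $0$ otherwise, $0\cdot\infty=0$. Transformer $\mathsf{et}_c$: $\mathsf{et}_c[\mathtt{skip}](f)=f$; $\mathsf{et}_c[\mathtt{tick}(r)](f)=[c]\cdot\mathbf{r}+f$; $\mathsf{et}_c[\mathtt{halt}](f)=\mathbf{0}$; $\mathsf{et}_c[x:\approx d](f)=\lambda\sigma.\sum_{i}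 d(\sigma)(i)\, f(\sigma[x\mapsto i])$; $\mathsf{et}_c[\mathtt{if}_{[\psi]}(\varphi)\{C\}\{D\}](f)=[\psi\wedge\varphi]\cdot\mathsf{et}_c[C](f)+[\psi\wedge\neg\varphi]\cdot\mathsf{et}_c[D](f)$; $\mathsf{et}_c[\mathtt{while}_{[\psi]}(\varphi)\{C\}](f)=\mathrm{lfp}\,F.\ [\psi\wedge\varphi]\cdot\mathsf{et}_c[C](F)+[\psi\wedge\neg\varphi]\cdot f$ (least fixed point, pointwise order); $\mathsf{et}_c[C\,\square\,D](f)=\max(\mathsf{et}_c[C](f),\mathsf{et}_c[D](f))$; $\mathsf{et}_c[C\oplus_p D](f)=\mathbf{p}\cdot\mathsf{et}_c[C](f)+\mathbf{(1-p)}\cdot\mathsf{et}_c[D](f)$; $\mathsf{et}_c[C;D](f)=\mathsf{et}_c[C](\mathsf{et}_c[D](f))$. Configurations: $\mathrm{Conf}=(\mathrm{Cmd}\times\Sigma)\cup\Sigma\cup\{\bot\}$; an active configuration is written $\langle C,\sigma\rangle$. A multidistribution on a set $A$ is a countable multiset $\mu$ of pairs $q:a$ with $a\in A$, $0<q\le1$, and $\sum_{q:a\in\mu}q\le1$; $\mathbb{E}_\mu(g)=\sum_{q:a\in\mu}q\cdot g(a)$ (with multiplicity). For $0<p\le1$, $p\cdot\{q_i:a_i\}_i=\{p q_i:a_i\}_i$, and for a countable family with $p_i>0$, $\sum_ip_i\le1$, $\biguplus_i p_i\cdot\mu_i$ is the multiset union of the $p_i\cdot\mu_i$. For $h:A\to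 B$, $\overline h(\{q_i:a_i\}_i)=\{q_i:h(a_i)\}_i$. A configuration $\gamma$ is identified with $\{1:\gamma\}$; entries with probability $0$ are omitted. The one-step relation $\gamma\to_w\mu$ is the least relation closed under: $\langle\mathtt{skip},\sigma\rangle\to_0\sigma$; $\langle\mathtt{tick}(r),\sigma\rangle\to_r\sigma$; $\langle\mathtt{halt},\sigma\rangle\to_0\bot$; $\langle x:\approx d,\sigma\rangle\to_0\{d(\sigma)(i):\sigma[x\mapsto i]\mid d(\sigma)(i)>0\}$; $\langle\mathtt{if}_{[\psi]}(\varphi)\{C\}\{D\},\sigma\rangle\to_0\langle C,\sigma\rangle$ if $\sigma\models\psi\wedge\varphi$, $\to_0\langle D,\sigma\rangle$ if $\sigma\models\psi\wedge\neg\varphi$, $\to_0\bot$ if $\sigma\models\neg\psi$; $\langle\mathtt{while}_{[\psi]}(\varphi)\{C\},\sigma\rangle\to_0\langle C;\mathtt{while}_{[\psi]}(\varphi)\{C\},\sigma\rangle$ if $\sigma\models\psi\wedge\varphi$, $\to_0\sigma$ if $\sigma\models\psi\wedge\neg\varphi$, $\to_0\bot$ if $\sigma\models\neg\psi$; $\langle C\,\square\,D,\sigma\rangle\to_0\langle C,\sigma\rangle$ and $\to_0\langle D,\sigma\rangle$; $\langle C\oplus_pD,\sigma\rangle\to_0\{p:\langle C,\sigma\rangle,1-p:\langle D,\sigma\rangle\}$; if $\langle C,\sigma\rangle\to_r\mu$ then $\langle C;D,\sigma\rangle\to_r\overline{\kappa_D}(\mu)$, where $\kappa_D(\langle C',\sigma'\rangle)=\langle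 C';D,\sigma'\rangle$, $\kappa_D(\sigma')=\langle D,\sigma'\rangle$, $\kappa_D(\bot)=\bot$. The lifted relation $\mu\Rightarrow_w\nu$ on multidistributions is the least relation with: $\mu\Rightarrow_0\mu$; $\{1:\gamma\}\Rightarrow_w\mu$ whenever $\gamma\to_w\mu$; and if $\mu_i\Rightarrow_{w_i}\nu_i$ for all $i$ in a countable index set $I$, $p_i>0$, $\sum_ip_i\le1$, then $\biguplus_ip_i\cdot\mu_i\Rightarrow_{w}\biguplus_ip_i\cdot\nu_i$ with $w=\sum_ip_iw_i$. For an expectation $f$, $e_c(f):\mathrm{Conf}\to[0,\infty]$ is defined by $e_c(f)(\langle C,\sigma\rangle)=\mathsf{et}_c[C](f)(\sigma)$, $e_c(f)(\sigma)=f(\sigma)$, $e_c(f)(\bot)=0$. *)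

From HB Require Import structures.
From mathcomp Require Import all_boot all_order all_algebra.
From mathcomp Require Import all_classical all_reals.
From mathcomp Require Import ereal esum.

Set Implicit Arguments.
Unset Strict Implicit.
Unset Printing Implicit Defensive.

Import Order.TTheory GRing.Theory Num.Theory.
Local Open Scope classical_set_scope.
Local Open Scope ring_scope.

Section Lang.
Variables (R : realType) (V : finType).

Definition store := V -> int.
Definition upd (s : store) (x : V) (i : int) : store :=
  fun y => if y == x then i else s y.

(* Boolean expressions, represented by their semantics sigma |= phi *)
Definition bexp := store -> bool.

Inductive cmd : Type :=
| Skip
| Tick (r : rat) of (0 <= r)
| Halt
| Assign (x : V) (d : store -> int -> R)
    of (forall s i, 0 <= d s i)
     & (forall s, (\esum_(i in [set: int]) (d s i)%:E = 1)%E)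
| If (psi phi : bexp) (C D : cmd)
| While (psi phi : bexp) (C : cmd)
| NDet (C D : cmd)
| Prob (C : cmd) (p : R) (D : cmd) of (0 <= p <= 1)
| Seq (C D : cmd).

(* expectations: functions store -> [0, oo] (nonnegativity is a hypothesis
   wherever an expectation is required) *)
Definition expect := store -> \bar R.

Definition ind (b : bool) : R := if b then 1 else 0.

(* least fixed point in the pointwise order on expectations
   (Knaster--Tarski: pointwise meet of all pre-fixed points) *)
Definition lfp (Phi : expect -> expect) : expect :=
  fun s => ereal_inf [set g s | g in
     [set g : expect | (forall t, (0 <= g t)%E) /\ (forall t, (Phi g t <= g t)%E)]].

Fixpoint et (c : bool) (C : cmd) (f : expect) {struct C} : expect :=
  match C with
  | Skip => f
  | Tick r _ => fun s => ((ind c * ratr r)%:E + f s)%E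
  | Halt => fun _ => 0%E
  | Assign x d _ _ =>
      fun s => (\esum_(i in [set: int]) ((d s i)%:E * f (upd s x i)))%E
  | If psi phi C1 D1 =>
      fun s => ((ind (psi s && phi s))%:E * et c C1 f s
                + (ind (psi s && ~~ phi s))%:E * et c D1 f s)%E
  | While psi phi C1 =>
      lfp (fun F s => ((ind (psi s && phi s))%:E * et c C1 F s
                       + (ind (psi s && ~~ phi s))%:E * f s)%E)
  | NDet C1 D1 => fun s => Order.max (et c C1 f s) (et c D1 f s)
  | Prob C1 p D1 _ => fun s => (p%:E * et c C1 f s + (1 - p)%:E * et c D1 f s)%E
  | Seq C1 D1 => et c C1 (et c D1 f)
  end.

Inductive conf : Type :=
| Active (C : cmd) (s : store)
| Term (s : store)
| Bot.

(* multidistributions: countable multisets of pairs q : a, 0 < q <= 1,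
   total mass <= 1; represented by a countable index type (multiplicity
   = number of indices carrying the pair). *)
Record multidist := MDist {
  mI : countType;
  mq : mI -> R;
  mc : mI -> conf;
  mq_gt0 : forall i, 0 < mq i;
  mq_le1 : forall i, mq i <= 1;
  msum_le1 : (\esum_(i in [set: mI]) (mq i)%:E <= 1)%E }.
Arguments mq : clear implicits.
Arguments mc : clear implicits.

Definition Emd (mu : multidist) (g : conf -> \bar R) : \bar R :=
  (\esum_(i in [set: mI mu]) ((mq mu i)%:E * g (mc mu i)))%E.

(* mu is (as a multiset) the family {q j : a j | j in J} *)
Definition md_is (mu : multidist) (J : Type) (q : J -> R) (a : J -> conf) : Prop :=
  exists e : mI mu -> J, bijective e /\
    forall k, mq mu k = q (e k) /\ mc mu k = a (e k).

Definition md_dirac (mu : multidist) (g : conf) : Prop :=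
  md_is mu (fun _ : unit => 1) (fun _ => g).

Definition kappa (D : cmd) (g : conf) : conf :=
  match g with
  | Active C s => Active (Seq C D) s
  | Term s => Active D s
  | Bot => Bot
  end.

Inductive step : conf -> R -> multidist -> Prop :=
| st_skip s mu : md_dirac mu (Term s) -> step (Active Skip s) 0 mu
| st_tick r h s mu : md_dirac mu (Term s) -> step (Active (@Tick r h) s) (ratr r) mu
| st_halt s mu : md_dirac mu Bot -> step (Active Halt s) 0 mu
| st_assign x d h1 h2 s mu :
    md_is mu (fun i : {i : int | 0 < d s i} => d s (sval i))
             (fun i => Term (upd s x (sval i))) ->
    step (Active (@Assign x d h1 h2) s) 0 mu
| st_if_t psi phi C D s mu : psi s && phi s ->
    md_dirac mu (Active C s) -> step (Active (If psi phi C D) s) 0 mu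
| st_if_f psi phi C D s mu : psi s && ~~ phi s ->
    md_dirac mu (Active D s) -> step (Active (If psi phi C D) s) 0 mu
| st_if_bot psi phi C D s mu : ~~ psi s ->
    md_dirac mu Bot -> step (Active (If psi phi C D) s) 0 mu
| st_while_t psi phi C s mu : psi s && phi s ->
    md_dirac mu (Active (Seq C (While psi phi C)) s) ->
    step (Active (While psi phi C) s) 0 mu
| st_while_f psi phi C s mu : psi s && ~~ phi s ->
    md_dirac mu (Term s) -> step (Active (While psi phi C) s) 0 mu
| st_while_bot psi phi C s mu : ~~ psi s ->
    md_dirac mu Bot -> step (Active (While psi phi C) s) 0 mu
| st_ndet_l C D s mu : md_dirac mu (Active C s) -> step (Active (NDet C D) s) 0 mu
| st_ndet_r C D s mu : md_dirac mu (Active D s) -> step (Active (NDet C D) s) 0 mu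
| st_prob C p D h s mu :
    md_is mu (fun b : {b : bool | 0 < (if b then p else 1 - p)} =>
                if sval b then p else 1 - p)
             (fun b => Active (if sval b then C else D) s) ->
    step (Active (@Prob C p D h) s) 0 mu
| st_seq C D s r mu' mu : step (Active C s) r mu' ->
    md_is mu (mq mu') (fun k => kappa D (mc mu' k)) ->
    step (Active (Seq C D) s) r mu.

Inductive lstep : multidist -> R -> multidist -> Prop :=
| ls_refl mu : lstep mu 0 mu
| ls_step g w mu nu : md_dirac mu g -> step g w nu -> lstep mu w nu
| ls_union (J : countType) (p : J -> R) (mus nus : J -> multidist) (ws : J -> R)
    (w : R) (mu nu : multidist) :
    (forall j, lstep (mus j) (ws j) (nus j)) ->
    (forall j, 0 < p j) ->
    (\esum_(j in [set: J]) (p j)%:E <= 1)%E ->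
    w%:E = (\esum_(j in [set: J]) (p j * ws j)%:E)%E ->
    md_is mu (fun jk : {j : J & mI (mus j)} => p (tag jk) * mq (mus (tag jk)) (tagged jk))
             (fun jk => mc (mus (tag jk)) (tagged jk)) ->
    md_is nu (fun jk : {j : J & mI (nus j)} => p (tag jk) * mq (nus (tag jk)) (tagged jk))
             (fun jk => mc (nus (tag jk)) (tagged jk)) ->
    lstep mu w nu.

Definition ec (c : bool) (f : expect) (g : conf) : \bar R :=
  match g with
  | Active C s => et c C f s
  | Term s => f s
  | Bot => 0%E
  end.

End Lang.

(* Every rule of the one-step relation is matched by a clause of et_c: a
   deterministic step preserves e_c(f), a tick pays [c]*r, a nondeterministic
   step picks one branch of a max, a probabilistic or sampling step averages,
   and a loop unfolding uses that the least fixed point is a pre-fixed point.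
   Sequencing is handled by running the same argument for C against the
   post-expectation et_c[D](f).  For the lifted relation, the expectation of a
   weighted union is the weighted sum of expectations, so the inequality is
   summed over the components. *)

From Pilot Require Import Defs.
From mathcomp Require Import all_boot all_order all_algebra.
From mathcomp Require Import all_classical all_reals.
From mathcomp Require Import ereal esum.
Import Order.TTheory GRing.Theory Num.Theory.

Set Implicit Arguments.
Unset Strict Implicit.
Unset Printing Implicit Defensive.
Local Open Scope classical_set_scope.
Local Open Scope ring_scope.
Local Open Scope ereal_scope.

Section ExtendedSums.
Variable R : realType.

Lemma ge0_esumZl (T : choiceType) (S : set T) (a : T -> \bar R) (r : R) :
  (0 <= r)%R -> (forall i, S i -> 0 <= a i) ->
  \esum_(i in S) (r%:E * a i) = r%:E * \esum_(i in S) a i.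
Proof.
move=> r_ge0 a_ge0.
have fsumZl A : fsets S A -> r%:E * \sum_(i \in A) a i = \sum_(i \in A) r%:E * a i.
  move=> [finA AS]; rewrite !fsbig_finite // big_seq [in RHS]big_seq.
  by rewrite ge0_sume_distrr // => i; rewrite in_fset_set // inE => /AS /a_ge0.
rewrite /esum -ereal_supZl //; last first.
  by apply/set0P; exists 0; exists set0; [exact: fsets_set0|rewrite fsbig_set0].
congr ereal_sup; apply/seteqP; split => x /=.
- by move=> [A SA <-]; exists (\sum_(i \in A) a i); [exists A|rewrite fsumZl].
- by move=> [_ [A SA <-] <-]; exists A; rewrite ?fsumZl.
Qed.

Lemma esum_support_gt0 (T : choiceType) (q : T -> R) (F : T -> \bar R) :
  (forall i, 0 <= q i)%R ->
  \esum_(j in [set: {i : T | (0 < q i)%R}]) (q (sval j))%:E * F (sval j) =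
  \esum_(i in [set: T]) (q i)%:E * F i.
Proof.
move=> q_ge0.
transitivity (\esum_(i in [set i | (0 < q i)%R]) (q i)%:E * F i).
  symmetry; apply: (reindex_esum _ _ sval (fun i => (q i)%:E * F i)).
  split=> [[i qi] _ //|[i qi] [j qj] _ _ /= eij|i /= qi]; first exact/val_inj.
  by exists (exist _ i qi).
rewrite esum_mkcond; apply: eq_esum => i _; rewrite mem_setE.
case: ifPn => //; rewrite -leNgt => qi_le0.
by rewrite (@le_anti _ _ (q i) 0%R) ?mul0e ?qi_le0 ?q_ge0.
Qed.

Lemma esum_sigT (J : choiceType) (T_ : J -> choiceType) (g : {j : J & T_ j} -> \bar R) :
  (forall k, 0 <= g k) ->
  \esum_(k in [set: {j : J & T_ j}]) g k =
  \esum_(j in [set: J]) \esum_(x in [set: T_ j]) g (Tagged T_ x).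
Proof.
move=> g_ge0.
transitivity (\esum_(j in [set: J]) \esum_(k in [set k : {j : J & T_ j} | tag k = j]) g k).
  rewrite esum_esum //.
  rewrite (reindex_esum ([set: J] `*`` (fun j => [set k | tag k = j])) _ snd) //.
  split=> // [[j1 k1] [j2 k2] /set_mem [_ /= <-] /set_mem [_ /= <-] /= -> //|k _].
  by exists (tag k, k).
apply: eq_esum => j _.
rewrite (reindex_esum [set: T_ j] [set k | tag k = j] (Tagged T_)) //.
split=> [x _ //|x y _ _|[j' x] /= <-]; [exact: eq_from_Tagged|by exists x].
Qed.

Lemma esum_bool (F : bool -> \bar R) :
  (forall b, 0 <= F b) -> \esum_(b in [set: bool]) F b = F true + F false.
Proof.
move=> F_ge0; rewrite (esumID [set true]) // setTI.
rewrite (_ : [set: bool] `&` ~` [set true] = [set false]); last first.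
  by apply/seteqP; split => -[] //=; move=> [].
by rewrite !esum_set1.
Qed.

End ExtendedSums.

Section Transformer.
Variables (R : realType) (V : finType).
Local Notation expect := (expect R V).
Local Notation cmd := (cmd R V).
Local Notation ind := (@ind R).

Lemma ind_ge0 b : (0 <= ind b)%R.
Proof. by case: b; rewrite /ind. Qed.

Lemma guarded_sumE (p q : bool) (x y : \bar R) :
  (ind (p && q))%:E * x + (ind (p && ~~ q))%:E * y = if p then if q then x else y else 0.
Proof. by rewrite /ind; case: p; case: q; rewrite /= ?mul1e ?mul0e ?adde0 ?add0e. Qed.

Lemma lfp_ge0 (Phi : expect -> expect) s : 0 <= lfp Phi s.
Proof. by apply: le_ereal_inf_tmp => _ [g [g_ge0 _] <-]. Qed.

Lemma lfp_prefixpoint (Phi : expect -> expect) :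
  (forall F G, (forall s, F s <= G s) -> forall s, Phi F s <= Phi G s) ->
  forall s, Phi (lfp Phi) s <= lfp Phi s.
Proof.
move=> Phi_mono s; apply: le_ereal_inf_tmp => _ [g [g_ge0 g_pre] <-].
apply: le_trans (g_pre s); apply: Phi_mono => t.
by apply: ereal_inf_lbound; exists g.
Qed.

Lemma et_ge0 c (C : cmd) (f : expect) :
  (forall s, 0 <= f s) -> forall s, 0 <= et c C f s.
Proof.
elim: C f => [| r r_ge0 || x d d_ge0 ? | psi phi C IHC D IHD | psi phi C _
              | C IHC D IHD | C IHC p D IHD /andP[p_ge0 p_le1] | C IHC D IHD] f f_ge0 s //=.
- by rewrite adde_ge0 // lee_fin mulr_ge0 ?ind_ge0 ?ler0q.
- by apply: esum_ge0 => i _; rewrite mule_ge0 // lee_fin.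
- by rewrite adde_ge0 // mule_ge0 ?lee_fin ?ind_ge0 ?IHC ?IHD.
- exact: lfp_ge0.
- by rewrite le_max IHC.
- by rewrite adde_ge0 // mule_ge0 ?lee_fin ?subr_ge0 ?IHC ?IHD.
- by apply: IHC; apply: IHD.
Qed.

Lemma et_mono c (C : cmd) (f g : expect) :
  (forall s, f s <= g s) -> forall s, et c C f s <= et c C g s.
Proof.
elim: C f g => [| r ? || x d d_ge0 ? | psi phi C IHC D IHD | psi phi C _
              | C IHC D IHD | C IHC p D IHD /andP[p_ge0 p_le1] | C IHC D IHD] f g fg s //=.
- exact: leeD2l.
- by apply: le_esum => i _; rewrite lee_wpmul2l ?lee_fin.
- by rewrite leeD // lee_wpmul2l ?lee_fin ?ind_ge0 ?IHC ?IHD.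
- apply: ereal_inf_le_tmp => _ [h [h_ge0 h_pre] <-]; exists h => //; split=> // t.
  by apply: le_trans (h_pre t); rewrite leeD2l // lee_wpmul2l ?lee_fin ?ind_ge0.
- by rewrite le_max2 ?IHC ?IHD.
- by rewrite leeD // lee_wpmul2l ?lee_fin ?subr_ge0 ?IHC ?IHD.
- by apply: IHC; apply: IHD.
Qed.

Lemma et_while_unfold c psi phi (C : cmd) f s :
  (if psi s then if phi s then et c (Seq C (While psi phi C)) f s else f s else 0)
  <= et c (While psi phi C) f s.
Proof.
rewrite -guarded_sumE; apply: lfp_prefixpoint => F G FG t.
by rewrite leeD2r // lee_wpmul2l ?lee_fin ?ind_ge0 ?et_mono.
Qed.

End Transformer.

Section Multidistributions.
Variables (R : realType) (V : finType).
Local Notation expect := (expect R V).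
Local Notation cmd := (cmd R V).
Local Notation conf := (conf R V).
Local Notation multidist := (multidist R V).
Local Notation mq m := (@Defs.mq R V m).
Local Notation mc m := (@Defs.mc R V m).

Lemma ec_ge0 c (f : expect) g : (forall s, 0 <= f s) -> 0 <= ec c f g.
Proof. by move=> f_ge0; case: g => //= C s; apply: et_ge0. Qed.

Lemma ec_kappa c (f : expect) (D : cmd) g : ec c f (kappa D g) = ec c (et c D f) g.
Proof. by case: g. Qed.

Lemma Emd_ge0 (mu : multidist) g : (forall x, 0 <= g x) -> 0 <= Emd mu g.
Proof.
by move=> g_ge0; apply: esum_ge0 => i _; rewrite mule_ge0 // lee_fin ltW // mq_gt0.
Qed.

Lemma Emd_is (mu : multidist) (J : choiceType) (q : J -> R) (a : J -> conf) g :
  md_is mu q a -> Emd mu g = \esum_(j in [set: J]) (q j)%:E * g (a j).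
Proof.
move=> [e [e_bij mu_e]]; rewrite /Emd (reindex_esum [set: mI mu] [set: J] e).
  by apply: eq_esum => k _; case: (mu_e k) => -> ->.
by rewrite setTT_bijective.
Qed.

Lemma Emd_dirac (mu : multidist) g h : 0 <= h g -> md_dirac mu g -> Emd mu h = h g.
Proof.
move=> hg_ge0 /(@Emd_is _ unit) ->.
rewrite (_ : [set: unit] = [set tt]); last by apply/seteqP; split => -[].
by rewrite esum_set1 mul1e.
Qed.

Lemma Emd_kappa c (f : expect) (D : cmd) (mu mu' : multidist) :
  md_is mu (mq mu') (fun k => kappa D (mc mu' k)) ->
  Emd mu (ec c f) = Emd mu' (ec c (et c D f)).
Proof. by move=> /Emd_is ->; apply: eq_esum => k _; rewrite ec_kappa. Qed.

Lemma Emd_union (J : countType) (p : J -> R) (m : J -> multidist) (mu : multidist) g :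
  (forall j, (0 < p j)%R) -> (forall x, 0 <= g x) ->
  md_is mu (fun jk : {j : J & mI (m j)} => p (tag jk) * mq (m (tag jk)) (tagged jk))%R
           (fun jk => mc (m (tag jk)) (tagged jk)) ->
  Emd mu g = \esum_(j in [set: J]) (p j)%:E * Emd (m j) g.
Proof.
move=> p_gt0 g_ge0 /Emd_is ->.
have mq_ge0 j k : (0 <= mq (m j) k)%R by rewrite ltW // mq_gt0.
rewrite esum_sigT => [|k]; last by rewrite mule_ge0 // lee_fin mulr_ge0 // ltW.
apply: eq_esum => j _; rewrite /Emd -ge0_esumZl ?ltW // => [|k _]; last first.
  by rewrite mule_ge0 ?lee_fin.
by apply: eq_esum => k _ /=; rewrite EFinM muleA.
Qed.

End Multidistributions.

Section Soundness.
Variables (R : realType) (V : finType).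
Local Notation expect := (expect R V).
Local Notation multidist := (multidist R V).
Local Notation ind := (@ind R).

Lemma step_w_ge0 g w (nu : multidist) : step g w nu -> (0 <= w)%R.
Proof. by elim => *; rewrite ?ler0q. Qed.

Lemma lstep_w_ge0 (mu : multidist) w nu : lstep mu w nu -> (0 <= w)%R.
Proof.
elim=> // [g w' mu' nu' _ /step_w_ge0 //|J p mus nus ws w' mu' nu' _ ws_ge0 p_gt0 _ w'E _ _].
by rewrite -lee_fin w'E; apply: esum_ge0 => j _; rewrite lee_fin mulr_ge0 // ltW.
Qed.

Lemma step_sound c g w (nu : multidist) : step g w nu ->
  forall f : expect, (forall s, 0 <= f s) ->
  (ind c * w)%:E + Emd nu (ec c f) <= ec c f g.
Proof.
elim=> {g w nu}
  [s mu mu_dirac|r ? s mu mu_dirac|s mu mu_dirac|x d d_ge0 ? s mu mu_is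
  |psi phi C D s mu hs mu_dirac|psi phi C D s mu hs mu_dirac|psi phi C D s mu hs mu_dirac
  |psi phi C s mu hs mu_dirac|psi phi C s mu hs mu_dirac|psi phi C s mu hs mu_dirac
  |C D s mu mu_dirac|C D s mu mu_dirac
  |C p D p01 s mu mu_is|C D s r mu' mu _ IH mu_is] f f_ge0;
  rewrite ?mulr0 ?add0e ?(Emd_dirac (ec_ge0 _ _ f_ge0) mu_dirac) //=.
- by rewrite (Emd_is _ mu_is) (@esum_support_gt0 _ _ _ (fun i => f (upd s x i))).
- by rewrite guarded_sumE; case/andP: hs => -> ->.
- by rewrite guarded_sumE; case/andP: hs => -> /negbTE ->.
- by rewrite guarded_sumE (negbTE hs).
- by apply: le_trans (et_while_unfold _ _ _ _ _ _); case/andP: hs => -> ->.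
- by apply: le_trans (et_while_unfold _ _ _ _ _ _); case/andP: hs => -> /negbTE ->.
- exact: lfp_ge0.
- by rewrite le_max lexx.
- by rewrite le_max lexx orbT.
- have /andP[p_ge0 p_le1] := p01.
  have q_ge0 b : (0 <= if b then p else 1 - p)%R by case: b; rewrite ?subr_ge0.
  rewrite (Emd_is _ mu_is) (@esum_support_gt0 _ _ _ (fun b => et c (if b then C else D) f s)) //.
  by rewrite esum_bool // => b; rewrite mule_ge0 ?lee_fin ?et_ge0.
- by rewrite (Emd_kappa _ _ mu_is); apply: IH; apply: et_ge0.
Qed.

Lemma lstep_sound c (mu : multidist) w nu : lstep mu w nu ->
  forall f : expect, (forall s, 0 <= f s) ->
  (ind c * w)%:E + Emd nu (ec c f) <= Emd mu (ec c f).
Proof.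
elim=> {mu w nu} [mu f _|g w mu nu mu_dirac g_step f f_ge0|].
- by rewrite mulr0 add0e.
- by rewrite (Emd_dirac (ec_ge0 _ _ f_ge0) mu_dirac); apply: step_sound.
move=> J p mus nus ws w mu nu ls IH p_gt0 _ wE mu_is nu_is f f_ge0.
have ec_ge0 := fun g => ec_ge0 c g f_ge0.
have ws_ge0 j : (0 <= ws j)%R := lstep_w_ge0 (ls j).
have p_ge0 j : (0 <= p j)%R := ltW (p_gt0 j).
rewrite (Emd_union p_gt0 ec_ge0 mu_is) (Emd_union p_gt0 ec_ge0 nu_is) EFinM wE.
rewrite -ge0_esumZl ?ind_ge0 // => [|j _]; last by rewrite lee_fin mulr_ge0.
rewrite -esumD => [|j _|j _]; last 2 first.
- by rewrite mule_ge0 ?lee_fin ?mulr_ge0 ?ind_ge0.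
- by rewrite mule_ge0 ?Emd_ge0 ?lee_fin.
apply: le_esum => j _; rewrite -EFinM mulrCA EFinM -ge0_muleDr ?Emd_ge0 //.
  by apply: lee_wpmul2l; [rewrite lee_fin|exact: IH].
by rewrite lee_fin mulr_ge0 ?ind_ge0.
Qed.

End Soundness.

Theorem mainTheorem4 (R : realType) (V : finType) (mu nu : multidist R V) (w : R)
  (f : store V -> \bar R) (c : bool) :
  (0 <= w)%R ->
  (forall s, (0 <= f s)%E) ->
  lstep mu w nu ->
  ((@ind R c * w)%:E + Emd nu (ec c f) <= Emd mu (ec c f))%E.
Proof. by move=> _ f_ge0 /lstep_sound; apply. Qed.
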